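(* Let $(\mathcal G,c,v_0,v_1)$ be a properly embedded doubly marked finite weighted planar map (with properly embedded dual) such that for every $x\in\mathcal V\mathcal G$ every point $p$ of the metric graph with $\mathfrak h(p)=\mathfrak h(x)$ is a vertex. Let $a\in(0,1)$ with $\mathfrak h^{-1}(a)\subset\mathcal V\mathcal G$ nonempty, and let $X^{\mu_a}$ be the random walk on $(\mathcal G,c)$ with $X_0$ distributed according to $\mu_a$. Let $N\in\mathbb N$ and $a_0=a,a_1,\dots,a_N\in(0,1)$ be admissible, i.e. $\mathbb P_{\mu_a}(\mathfrak h(X_{n+1})=a_{n+1}\mid\mathfrak h(X_n)=a_n)>0$ for $n=0,\dots,N-1$. Then for every $i\in\{0,\dots,N\}$ and every $x_i\in\mathfrak h^{-1}(a_i)$, $$\mathbb P_{\mu_a}\big(X_i=x_i\ \big|\ \{\mathfrak h(X_n)=a_n\}_{n=1}^N\big)=\mu_{a_i}(x_i).$$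
   Context: A doubly marked finite weighted planar map $(\mathcal G,c,v_0,v_1)$ is a finite connected planar multigraph with positive edge conductances and marked vertices $v_0,v_1$, properly embedded in $\mathcal C_{2\pi}=\mathbb R/2\pi\mathbb Z\times\mathbb R$ (non-crossing edges, $v_0$ at $-\infty$, $v_1$ at $+\infty$), with its dual properly embedded (each edge crossed once by a dual edge joining its two incident faces). The random walk moves $x\to y$ with probability $c_{xy}/\pi(x)$. Voltage $\mathfrak h$: $\mathfrak h(v_0)=0$, $\mathfrak h(v_1)=1$, harmonic elsewhere; extended to the metric graph $\mathbb G$ (each edge an isometric copy of $[0,1]$) by linear interpolation along edges. $\nabla\mathfrak h(e)=c_e(\mathfrak h(e^+)-\mathfrak h(e^-))$; an edge is harmonically oriented if $\mathfrak h(e^+)\ge\mathfrak h(e^-)$; $\eta=\sum\nabla\mathfrak h(e)$ over harmonically oriented edges with tail $v_0$. For $x\in\mathcal V\mathcal G$, $\mathrm{length}(x)=\sum\nabla\mathfrak h(e)$ over harmonically oriented edges with head $x$ (the length of the horizontal segment of $x$ in the Smith diagram). For $a\in(0,1)$, $\mu_a(x)=\mathrm{length}(x)/\eta$ for $x\in\mathfrak h^{-1}(a)$; this is a probability measure on $\mathfrak h^{-1}(a)$. *)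

From HB Require Import structures.
From mathcomp Require Import all_boot all_order all_fingroup all_algebra.
From mathcomp Require Import reals.
Set Implicit Arguments. Unset Strict Implicit. Unset Printing Implicit Defensive.
Import Order.TTheory GRing.Theory Num.Theory.
Local Open Scope ring_scope.

(* V : vertices, D : darts (oriented edges).  tail d is the tail vertex of  *)
(* dart d, alpha is the fixed-point-free involution reversing darts (an     *)
(* edge is an alpha-orbit {d, alpha d}), sigma is the rotation system: the  *)
(* cyclic order of darts around each vertex.  Faces are the orbits of       *)
(* alpha * sigma (i.e. d |-> sigma (alpha d)).  Loops and multiple edges    *)
(* are allowed.                                                              *)

Section Maps.
Variables (R : realType) (V D : finType).
Variables (tail : D -> V) (alpha sigma : {perm D}) (c : D -> R).

Definition head (d : D) : V := tail (alpha d).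

Definition is_map : Prop :=
  [/\ (forall d, alpha (alpha d) = d),
      (forall d, alpha d != d),
      (forall d, tail (sigma d) = tail d) &
      (forall d d', tail d = tail d' -> d' \in porbit sigma d)].

Definition adj (x y : V) : bool := [exists d, (tail d == x) && (head d == y)].

Definition connected_graph : Prop := forall x y : V, connect adj x y.

(* Euler's formula V - E + F = 2 : the map is a genus-0 (planar/spherical)
   cellular embedding of the connected graph. *)
Definition planar : Prop :=
  (#|V| + #|porbits (alpha * sigma)| = 2 + #|D|./2)%N.

Definition planar_map : Prop := [/\ is_map, connected_graph & planar].

Definition conductance : Prop :=
  (forall d, 0 < c d) /\ (forall d, c (alpha d) = c d).

Definition pi (x : V) : R := \sum_(d | tail d == x) c d.
Definition trans (x y : V) : R :=
  (\sum_(d | (tail d == x) && (head d == y)) c d) / pi x.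

Definition is_voltage (v0 v1 : V) (h : V -> R) : Prop :=
  [/\ h v0 = 0, h v1 = 1 &
      forall x, x != v0 -> x != v1 ->
        \sum_(d | tail d == x) c d * (h (head d) - h x) = 0].

Definition grad (h : V -> R) (d : D) : R := c d * (h (head d) - h (tail d)).
Definition harm_oriented (h : V -> R) (d : D) : bool := h (tail d) <= h (head d).

Definition eta (v0 : V) (h : V -> R) : R :=
  \sum_(d | harm_oriented h d && (tail d == v0)) grad h d.

Definition length (h : V -> R) (x : V) : R :=
  \sum_(d | harm_oriented h d && (head d == x)) grad h d.

Definition mu (v0 : V) (h : V -> R) (a : R) (x : V) : R :=
  if h x == a then length h x / eta v0 h else 0.

(* Points of the metric graph with value t are all vertices: no interior
   point of an edge (linear interpolation of h along the edge) takes value t. *)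
Definition level_in_vertices (h : V -> R) (t : R) : Prop :=
  forall (d : D) (s : R), 0 < s < 1 ->
    (1 - s) * h (tail d) + s * h (head d) != t.

Definition walk_prob (start : V -> R) (N : nat)
    (E : pred {ffun 'I_N.+1 -> V}) : R :=
  \sum_(p : {ffun 'I_N.+1 -> V} | E p)
     start (p ord0) *
     \prod_(n < N) trans (p (inord n)) (p (inord n.+1)).

Definition walk_cond (start : V -> R) (N : nat)
    (E F : pred {ffun 'I_N.+1 -> V}) : R :=
  walk_prob start [pred p | E p && F p] / walk_prob start F.

End Maps.

Arguments walk_prob {R V D} tail alpha c start N E.
Arguments walk_cond {R V D} tail alpha c start N E F.

From Pilot Require Import Defs.
From HB Require Import structures.
From mathcomp Require Import all_boot all_order all_fingroup all_algebra.
From mathcomp Require Import reals.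
From mathcomp Require Import ring lra.
Import Order.TTheory GRing.Theory Num.Theory.
Local Open Scope ring_scope.

(* The proof separates a general fact about Markov chains from the geometry
   of the voltage.

   Let m n be measures carried by the levels as_ n
      with m 0 the initial law, such that (forward) the walk started from m n
      and killed off level as_ n.+1 has law K_n * m n.+1, and (backward) from
      every vertex of level as_ n the walk reaches level as_ n.+1 with one and
      the same probability s_n; both K_n and s_n nonzero.  Induction on the
      length of the paths then shows that the walk conditioned to follow the
      levels has law m i at time i (level_conditioned_law).

   Because the level of every vertex contains no interior
      point of an edge, the edges leaving a level t in (0,1) reach exactly two
      levels u < t < w.  Harmonicity then makes length, stationary weight pi
      and the conductances to the levels u and w proportional at every vertex
      of level t; hence mu_t is proportional to pi on the level (mu_on_level),
      reversibility gives the forward property (forward_mu), the exit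
      probabilities give the backward property (backward_trans), and
      conservation of current through the level shows that mu_t is a
      probability (mu_sum1).

   3. The theorem applies 1 with m n = mu_(as_ n); admissibility provides an
      edge between consecutive levels, which makes the constants nonzero. *)

Lemma sum_by_fibers {R : realType} {I J : finType} (P : pred I) (f : I -> J)
    (F : I -> R) (g : J -> R) :
  \sum_(i | P i) F i * g (f i) = \sum_j (\sum_(i | P i && (f i == j)) F i) * g j.
Proof.
rewrite (partition_big f predT) //; apply: eq_bigr => j _; rewrite mulr_suml.
by apply: eq_bigr => i /andP [_ /eqP ->].
Qed.

Lemma sum_fibers_cond {R : realType} {I J : finType} (f : I -> J) (Q : pred J)
    (P : pred I) (F : I -> R) :
  \sum_j (if Q j then \sum_(i | (f i == j) && P i) F i else 0) =
  \sum_(i | Q (f i) && P i) F i.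
Proof.
rewrite [RHS](partition_big f Q) /=; last by move=> i /andP [].
rewrite [RHS]big_mkcond; apply: eq_bigr => j _; case: ifP => Qj //.
by apply: eq_bigl => i; case: eqP => [->|]; rewrite ?Qj ?andbF // andbT.
Qed.

Section LevelConditionedChain.

Variables (R : realType) (V : finType) (st : V -> R) (tr : V -> V -> R).
Variables (lev : V -> R) (as_ : nat -> R).

Definition path_weight M (p : {ffun 'I_M.+1 -> V}) : R :=
  st (p ord0) * \prod_(n < M) tr (p (inord n)) (p (inord n.+1)).

Definition path_init M (q : {ffun 'I_M.+2 -> V}) : {ffun 'I_M.+1 -> V} :=
  [ffun j : 'I_M.+1 => q (inord j)].

Definition path_snoc M (p : {ffun 'I_M.+1 -> V}) (y : V) : {ffun 'I_M.+2 -> V} :=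
  [ffun j : 'I_M.+2 => if (j <= M)%N then p (inord j) else y].

Definition on_levels M (p : {ffun 'I_M.+1 -> V}) : bool :=
  all (fun n => lev (p (inord n)) == as_ n) (iota 0 M.+1).

Arguments path_weight {M}. Arguments path_init {M}.
Arguments path_snoc {M}. Arguments on_levels {M}.

Lemma path_init_inord M (q : {ffun 'I_M.+2 -> V}) n :
  (n <= M)%N -> path_init q (inord n) = q (inord n).
Proof.
move=> nM; rewrite ffunE; congr (q _); apply: val_inj => /=.
by rewrite !inordK // ltnS // (leq_trans nM).
Qed.

Lemma path_init_snoc M (p : {ffun 'I_M.+1 -> V}) y : path_init (path_snoc p y) = p.
Proof.
apply/ffunP => j; rewrite !ffunE inordK; last exact: leq_trans (ltn_ord j) _.
by rewrite -ltnS ltn_ord; congr (p _); apply: val_inj; rewrite /= inordK.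
Qed.

Lemma path_snoc_last M (p : {ffun 'I_M.+1 -> V}) y : path_snoc p y (inord M.+1) = y.
Proof. by rewrite ffunE inordK // ltnn. Qed.

Lemma path_snoc_init M (q : {ffun 'I_M.+2 -> V}) :
  path_snoc (path_init q) (q (inord M.+1)) = q.
Proof.
apply/ffunP => j; rewrite ffunE; case: ifP => jM.
  rewrite path_init_inord //; congr (q _); apply: val_inj.
  by rewrite /= inordK // ltnS (leq_trans jM).
congr (q _); apply: val_inj; rewrite /= inordK //.
by apply/eqP; rewrite eqn_leq ltnNge jM /= -ltnS ltn_ord.
Qed.

Lemma sum_paths_snoc M (G : {ffun 'I_M.+1 -> V} -> V -> R) :
  \sum_(q : {ffun 'I_M.+2 -> V}) G (path_init q) (q (inord M.+1)) =
  \sum_(p : {ffun 'I_M.+1 -> V}) \sum_y G p y.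
Proof.
rewrite pair_bigA /= (reindex (fun pr => path_snoc pr.1 pr.2)) /=.
  by apply: eq_bigr => -[p y] _ /=; rewrite path_init_snoc path_snoc_last.
exists (fun q => (path_init q, q (inord M.+1))) => [[p y] _|q _] /=.
  by rewrite path_init_snoc path_snoc_last.
exact: path_snoc_init.
Qed.

Lemma sum_paths0 (G : {ffun 'I_1 -> V} -> R) :
  \sum_(p : {ffun 'I_1 -> V}) G p = \sum_y G [ffun => y].
Proof.
rewrite (reindex (fun y => [ffun => y])) //.
exists (fun p : {ffun 'I_1 -> V} => p ord0) => [y _|p _]; first by rewrite ffunE.
by apply/ffunP => j; rewrite ffunE (ord1 j).
Qed.

Lemma path_weight_snoc M (q : {ffun 'I_M.+2 -> V}) :
  path_weight q = path_weight (path_init q) * tr (q (inord M)) (q (inord M.+1)).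
Proof.
rewrite /path_weight big_ord_recr /= mulrA; congr (_ * _ * tr (q _) (q _)).
  by rewrite ffunE; congr (st (q _)); apply: val_inj; rewrite /= inordK.
by apply: eq_bigr => n _; rewrite !path_init_inord // ltnW.
Qed.

Lemma on_levels_snoc M (q : {ffun 'I_M.+2 -> V}) :
  on_levels q = on_levels (path_init q) && (lev (q (inord M.+1)) == as_ M.+1).
Proof.
rewrite /on_levels.
have -> : iota 0 M.+2 = iota 0 M.+1 ++ [:: M.+1] by rewrite -addn1 iotaD.
rewrite all_cat [all _ [:: _]]/= andbT; congr (_ && _); apply: eq_in_all.
move=> n; rewrite mem_iota add0n ltnS => /andP [_ nM].
by rewrite path_init_inord.
Qed.

Lemma on_levels_at M (p : {ffun 'I_M.+1 -> V}) n :
  on_levels p -> (n <= M)%N -> lev (p (inord n)) = as_ n.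
Proof. by move=> /allP onp nM; apply/eqP/onp; rewrite mem_iota add0n ltnS. Qed.

Variables (m : nat -> V -> R) (N : nat).
Hypothesis m_start : forall y, st y = m 0 y.
Hypothesis m_level : forall n y, lev y != as_ n -> m n y = 0.
Hypothesis m_forward : forall n, (n < N)%N -> exists K, K != 0 /\ forall y,
  \sum_x m n x * (if lev y == as_ n.+1 then tr x y else 0) = K * m n.+1 y.
Hypothesis m_backward : forall n, (n < N)%N -> exists s, s != 0 /\ forall z,
  lev z = as_ n -> \sum_y (if lev y == as_ n.+1 then tr z y else 0) = s.

Lemma sum_paths_ending M : (M <= N)%N -> exists Z, Z != 0 /\ forall y,
  \sum_(p : {ffun 'I_M.+1 -> V} | on_levels p && (p (inord M) == y)) path_weight p
  = Z * m M y.
Proof.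
elim: M => [|M IH] MN.
  exists 1; split=> [|y]; first exact: oner_neq0.
  rewrite big_mkcond sum_paths0 (bigD1 y) //= big1 => [|y' y'y]; last first.
    by rewrite ffunE (negPf y'y) andbF.
  rewrite !ffunE eqxx andbT /on_levels /= andbT /path_weight big_ord0 mulr1 !ffunE.
  rewrite mul1r addr0; case: ifP => [_|/negbT]; first exact: m_start.
  by move/m_level ->.
have [Z [Z0 HZ]] := IH (ltnW MN); have [K [K0 HK]] := m_forward M MN.
exists (Z * K); split=> [|y]; first by rewrite mulf_neq0.
pose step x := if lev y == as_ M.+1 then tr x y else 0.
pose G (p : {ffun 'I_M.+1 -> V}) y' :=
  if on_levels p && (lev y' == as_ M.+1) && (y' == y)
  then path_weight p * tr (p (inord M)) y' else 0.
rewrite big_mkcond (eq_bigr (fun q => G (path_init q) (q (inord M.+1)))); last first.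
  by move=> q _; rewrite /G on_levels_snoc path_weight_snoc path_init_inord // andbA.
rewrite sum_paths_snoc.
rewrite (eq_bigr (fun p =>
  if on_levels p then path_weight p * step (p (inord M)) else 0)).
  rewrite -big_mkcond /= sum_by_fibers.
  under eq_bigr => x _ do rewrite HZ -mulrA.
  by rewrite -mulr_sumr HK mulrA.
move=> p _; rewrite (bigD1 y) //= big1 => [|y' y'y]; last by rewrite /G (negPf y'y) andbF.
by rewrite /G eqxx andbT addr0 /step; case: (on_levels p) => //=; case: ifP; rewrite ?mulr0.
Qed.

(* Backward propagation: also constraining the levels after time i only
   rescales the law of the position at time i, by the backward hypothesis. *)
Lemma sum_paths_visiting i M : (i <= M)%N -> (M <= N)%N -> exists C, C != 0 /\
  forall x, \sum_(p : {ffun 'I_M.+1 -> V} | on_levels p && (p (inord i) == x))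
    path_weight p = C * m i x.
Proof.
elim: M => [|M IH] iM MN.
  by move: iM; rewrite leqn0 => /eqP ->; apply: sum_paths_ending.
have [->|iM1] := eqVneq i M.+1; first exact: sum_paths_ending.
have iM' : (i <= M)%N by rewrite -ltnS ltn_neqAle iM1 iM.
have [C [C0 HC]] := IH iM' (ltnW MN); have [s [s0 Hs]] := m_backward M MN.
exists (C * s); split=> [|x]; first by rewrite mulf_neq0.
pose G (p : {ffun 'I_M.+1 -> V}) y :=
  if on_levels p && (p (inord i) == x) && (lev y == as_ M.+1)
  then path_weight p * tr (p (inord M)) y else 0.
rewrite big_mkcond (eq_bigr (fun q => G (path_init q) (q (inord M.+1)))); last first.
  move=> q _; rewrite /G on_levels_snoc path_weight_snoc !path_init_inord //.
  by case: (on_levels _); case: (q (inord i) == x); rewrite /= ?andbF ?andbT.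
rewrite sum_paths_snoc (eq_bigr (fun p =>
  if on_levels p && (p (inord i) == x) then path_weight p * s else 0)).
  by rewrite -big_mkcond -mulr_suml HC mulrAC.
move=> p _; rewrite /G; case Ep: (on_levels p && _); last by rewrite big1.
rewrite -(Hs (p (inord M))); last by case/andP: Ep => onp _; apply: on_levels_at.
by rewrite mulr_sumr; apply: eq_bigr => y _; rewrite /=; case: ifP; rewrite ?mulr0.
Qed.

Definition levels_from1 M (p : {ffun 'I_M.+1 -> V}) : bool :=
  [forall n : 'I_M.+1, (1 <= n)%N ==> (lev (p n) == as_ n)].
Arguments levels_from1 {M}.

Lemma on_levelsE M (p : {ffun 'I_M.+1 -> V}) :
  on_levels p = (lev (p ord0) == as_ 0) && levels_from1 p.
Proof.
have inord0 : inord 0 = ord0 :> 'I_M.+1 by apply: val_inj; rewrite /= inordK.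
apply/allP/andP => [onp|[p0 /forallP pn] n].
  split; first by rewrite -inord0; apply: onp; rewrite mem_iota.
  apply/forallP => n; apply/implyP => _.
  by have := onp n; rewrite mem_iota add0n ltn_ord inord_val; apply.
rewrite mem_iota add0n ltnS; case: n => [|n] /andP [_ nM]; first by rewrite inord0.
by move: (pn (inord n.+1)); rewrite inordK // => /implyP; apply.
Qed.

(* st is carried by level as_ 0, so prescribing the levels at times >= 1
   is the same as prescribing them at all times. *)
Lemma sum_paths_levels_from1 (A : pred {ffun 'I_N.+1 -> V}) :
  \sum_(p | A p && levels_from1 p) path_weight p =
  \sum_(p | on_levels p && A p) path_weight p.
Proof.
rewrite big_mkcond [RHS]big_mkcond; apply: eq_bigr => p _.
rewrite on_levelsE; case: (boolP (lev (p ord0) == as_ 0)) => [_|/m_level p0].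
  by rewrite andbC.
by rewrite /path_weight m_start p0 mul0r if_same.
Qed.

Lemma level_conditioned_law i x : (i <= N)%N -> \sum_y m i y = 1 ->
  (\sum_(p : {ffun 'I_N.+1 -> V} | (p (inord i) == x) && levels_from1 p) path_weight p) /
  (\sum_(p : {ffun 'I_N.+1 -> V} | levels_from1 p) path_weight p) = m i x.
Proof.
move=> iN m1; have [C [C0 HC]] := sum_paths_visiting i N iN (leqnn N).
have total : \sum_(p : {ffun 'I_N.+1 -> V} | levels_from1 p) path_weight p = C.
  rewrite (eq_bigl (fun p => predT p && levels_from1 p)) // sum_paths_levels_from1.
  rewrite (partition_big (fun p : {ffun 'I_N.+1 -> V} => p (inord i)) predT) //=.
  rewrite -[RHS]mulr1 -m1 mulr_sumr; apply: eq_bigr => y _.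
  by rewrite -HC; apply: eq_bigl => p; rewrite andbT.
by rewrite sum_paths_levels_from1 HC total mulrC mulKf.
Qed.

End LevelConditionedChain.

Section VoltageLevels.

Variables (R : realType) (V D : finType) (tail : D -> V) (alpha : {perm D}).
Variables (c : D -> R) (v0 v1 : V) (h : V -> R).
Hypothesis alphaK : forall d, alpha (alpha d) = d.
Hypothesis c_gt0 : forall d, 0 < c d.
Hypothesis c_sym : forall d, c (alpha d) = c d.
Hypothesis connected : connected_graph tail alpha.
Hypothesis h_v0 : h v0 = 0.
Hypothesis h_v1 : h v1 = 1.
Hypothesis h_harmonic : forall x, x != v0 -> x != v1 ->
  \sum_(d | tail d == x) c d * (h (Defs.head tail alpha d) - h x) = 0.
Hypothesis h_levels : forall x, level_in_vertices tail alpha h (h x).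

Local Notation hd := (Defs.head tail alpha).
Local Notation pi_ := (Defs.pi tail c).
Local Notation grad_ := (grad tail alpha c h).
Local Notation eta_ := (Defs.eta tail alpha c v0 h).
Local Notation mu_ := (mu tail alpha c v0 h).
Local Notation trans_ := (trans tail alpha c).

Lemma headK d : hd (alpha d) = tail d.
Proof. by rewrite /Defs.head alphaK. Qed.

(* Since the graph is connected and v0 != v1, every vertex carries an edge. *)
Lemma out_dart x : exists d, tail d = x.
Proof.
have v01 : v0 != v1.
  by apply: contra_neq (@oner_neq0 R) => e; rewrite -h_v1 -e h_v0.
pose y := if x == v0 then v1 else v0.
have xy : x != y by rewrite /y; case: (eqVneq x v0) => [->|]; rewrite ?eqxx.
case/connectP: (connected x y) => -[|z q] /=; first by move=> _ e; rewrite e eqxx in xy.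
by case/andP => /existsP [d /andP [/eqP td _]] _ _; exists d.
Qed.

Lemma pi_gt0 x : 0 < pi_ x.
Proof.
have [d td] := out_dart x; rewrite /Defs.pi (bigD1 d) /=; last by rewrite td.
by rewrite ltr_pwDl // sumr_ge0 // => e _; apply: ltW.
Qed.

Lemma no_crossing d z : ~ (h (tail d) < h z < h (hd d)).
Proof.
move=> /andP [lo hi]; have tl_hd := lt_trans lo hi.
pose s := (h z - h (tail d)) / (h (hd d) - h (tail d)).
have gap : h (hd d) - h (tail d) != 0 by rewrite subr_eq0 gt_eqF.
have s01 : 0 < s < 1.
  by rewrite divr_gt0 ?subr_gt0 //= ltr_pdivrMr ?subr_gt0 // mul1r ltrD2r.
by have /eqP := h_levels z d s s01; apply; rewrite /s; field.
Qed.

Lemma no_crossing_rev d z : ~ (h (hd d) < h z < h (tail d)).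
Proof. by have := no_crossing (alpha d) z; rewrite headK. Qed.

Lemma edge_nonflat d : h (tail d) != h (hd d).
Proof.
apply/eqP => flat; have half : 0 < (2^-1 : R) < 1 by apply/andP; split; lra.
by have /eqP := h_levels (tail d) d _ half; apply; rewrite -flat; field.
Qed.

(* Minimum principle: the voltage is nonnegative. *)
Lemma voltage_ge0 x : 0 <= h x.
Proof.
rewrite leNgt; apply/negP => hx_neg.
have [y _ ymin] := @arg_minP _ R V x predT h isT.
have hy_neg : h y < 0 := le_lt_trans (ymin x isT) hx_neg.
have yv0 : y != v0 by apply: contraTneq hy_neg => ->; rewrite h_v0 ltxx.
have yv1 : y != v1 by apply: contraTneq hy_neg => ->; rewrite h_v1 ltr10.
have [d td] := out_dart y.
have : 0 < \sum_(e | tail e == y) c e * (h (hd e) - h y).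
  rewrite (bigD1 d) /=; last by rewrite td.
  rewrite ltr_pwDl ?sumr_ge0 // => [|e _].
    by rewrite mulr_gt0 // subr_gt0 lt_neqAle -td edge_nonflat td ymin.
  by apply: mulr_ge0; [apply: ltW | rewrite subr_ge0 ymin].
by rewrite h_harmonic // ltxx.
Qed.

(* Two edges leaving the same level downwards (resp. upwards) reach the same
   level: otherwise one of them would cross the level of the other's end. *)
Lemma down_level_unique d d' : h (tail d) = h (tail d') ->
  h (hd d) < h (tail d) -> h (hd d') < h (tail d') -> h (hd d) = h (hd d').
Proof.
move=> e l l'; case: (ltgtP (h (hd d)) (h (hd d'))) => // cmp.
  by case: (no_crossing_rev d (hd d')); rewrite cmp e l'.
by case: (no_crossing_rev d' (hd d)); rewrite cmp -e l.
Qed.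

Lemma up_level_unique d d' : h (tail d) = h (tail d') ->
  h (tail d) < h (hd d) -> h (tail d') < h (hd d') -> h (hd d) = h (hd d').
Proof.
move=> e l l'; case: (ltgtP (h (hd d)) (h (hd d'))) => // cmp.
  by case: (no_crossing d' (hd d)); rewrite cmp -e l.
by case: (no_crossing d (hd d')); rewrite cmp e l'.
Qed.

Definition neighbour_levels t u w : Prop :=
  u < t < w /\ forall d, h (tail d) = t -> h (hd d) = u \/ h (hd d) = w.

Lemma neighbour_levels_exist t : exists u w, neighbour_levels t u w.
Proof.
have [u [ut down]] : exists u, u < t /\
    forall d, h (tail d) = t -> h (hd d) < t -> h (hd d) = u.
  case: (pickP (fun d => (h (tail d) == t) && (h (hd d) < t))) => [d0|none].
    case/andP => /eqP e0 l0; exists (h (hd d0)); split=> // d e l.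
    by apply: down_level_unique; rewrite ?e ?e0.
  by exists (t - 1); split=> [|d e l]; [lra | move: (none d); rewrite e eqxx l].
have [w [tw up]] : exists w, t < w /\
    forall d, h (tail d) = t -> t < h (hd d) -> h (hd d) = w.
  case: (pickP (fun d => (h (tail d) == t) && (t < h (hd d)))) => [d0|none].
    case/andP => /eqP e0 l0; exists (h (hd d0)); split=> // d e l.
    by apply: up_level_unique; rewrite ?e ?e0.
  by exists (t + 1); split=> [|d e l]; [lra | move: (none d); rewrite e eqxx l].
exists u, w; split=> [|d e]; first by rewrite ut tw.
have := edge_nonflat d; rewrite e.
by case: (ltgtP (h (hd d)) t) => [/(down d e)|/(up d e)|->]; [left|right|].
Qed.

Lemma level_interior t x : 0 < t < 1 -> h x = t -> x != v0 /\ x != v1.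
Proof.
by move=> /andP [t0 t1] hx; split; apply/eqP => e; move: hx;
  rewrite e ?h_v0 ?h_v1 => ht; lra.
Qed.

Definition cond_to x s : R := \sum_(d | (tail d == x) && (h (hd d) == s)) c d.

Lemma split_by_levels x t u w (F : D -> R) : h x = t -> neighbour_levels t u w ->
  \sum_(d | tail d == x) F d =
  \sum_(d | (tail d == x) && (h (hd d) == u)) F d +
  \sum_(d | (tail d == x) && (h (hd d) == w)) F d.
Proof.
move=> hx [/andP [ut tw] nb]; have uw : u != w by rewrite lt_eqF // (lt_trans ut).
rewrite (bigID (fun d => h (hd d) == u)) /=; congr (_ + _).
apply: eq_bigl => d; case: eqP => //= td.
by have [->|->] := nb d (etrans (congr1 h td) hx); rewrite eqxx ?(negPf uw) // eq_sym.
Qed.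

Lemma cond_to_off x t u w s : h x = t -> neighbour_levels t u w ->
  s != u -> s != w -> cond_to x s = 0.
Proof.
move=> hx [_ nb] su sw; rewrite /cond_to big_pred0 // => d.
apply/andP => -[/eqP td /eqP hs]; have := nb d (etrans (congr1 h td) hx); rewrite hs.
by case=> /eqP; apply/negP.
Qed.

(* The length of x is the current entering x, which flows along the edges
   from x down to lower levels. *)
Lemma length_down x : length tail alpha c h x =
  \sum_(d | tail d == x) (if h (hd d) <= h x then c d * (h x - h (hd d)) else 0).
Proof.
rewrite /length (reindex_inj (@perm_inj _ alpha)) /= big_mkcond [RHS]big_mkcond.
apply: eq_bigr => d _; rewrite /harm_oriented /grad headK c_sym.
by case: eqP => [<-|]; rewrite ?andbF // andbT.
Qed.

Lemma level_balance x t u w : 0 < t < 1 -> h x = t -> neighbour_levels t u w ->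
  [/\ pi_ x = cond_to x u + cond_to x w,
      length tail alpha c h x = (t - u) * cond_to x u &
      cond_to x w = (t - u) / (w - t) * cond_to x u].
Proof.
move=> t01 hx nbs; have [xv0 xv1] := level_interior _ _ t01 hx.
have [/andP [ut tw] _] := nbs; have wt0 : w - t != 0 by rewrite subr_eq0 gt_eqF.
have by_levels := split_by_levels _ _ _ _ _ hx nbs; split; first exact: by_levels.
- rewrite length_down by_levels /cond_to mulr_sumr [X in _ + X]big1 ?addr0.
    by apply: eq_bigr => d /andP [_ /eqP ->]; rewrite hx (ltW ut) mulrC.
  by move=> d /andP [_ /eqP ->]; rewrite hx leNgt tw.
- have := h_harmonic x xv0 xv1; rewrite by_levels /cond_to.
  under eq_bigr => d /andP [_ /eqP ->] do rewrite hx.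
  under [X in _ + X = _]eq_bigr => d /andP [_ /eqP ->] do rewrite hx.
  rewrite -!mulr_suml; set A := \sum_(d | _) _; set B := \sum_(d | _) _ => balance.
  have flow : (w - t) * B = (t - u) * A.
    by apply/eqP; rewrite -subr_eq0 -[X in _ == X]balance; apply/eqP; ring.
  by rewrite -[B](mulKf wt0) flow; ring.
Qed.

Lemma pi_neq0 x : pi_ x != 0.
Proof.
have [d td] := out_dart x; rewrite gt_eqF // /Defs.pi (bigD1 d) /=; last by rewrite td.
by rewrite ltr_pwDl // sumr_ge0 // => e _; apply: ltW.
Qed.

Lemma grad_rev d : grad_ (alpha d) = - grad_ d.
Proof. by rewrite /grad headK c_sym -mulrN opprB. Qed.

Lemma sum_grad_sym (P : pred D) : (forall d, P (alpha d) = P d) ->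
  \sum_(d | P d) grad_ d = 0.
Proof.
move=> Psym; set S := \sum_(d | P d) _.
have : S = - S.
  rewrite {1}/S (reindex_inj (@perm_inj _ alpha)) /= -sumrN.
  by apply: eq_big => d; rewrite ?Psym // => _; rewrite grad_rev.
by move=> S_opp; lra.
Qed.

(* Kirchhoff: the current leaving the sublevel set {h < t} is the current
   leaving v0, the only source inside it. *)
Lemma sublevel_current t : 0 < t < 1 ->
  \sum_(d | h (tail d) < t) grad_ d = \sum_(d | tail d == v0) grad_ d.
Proof.
move=> /andP [t0 t1].
rewrite (eq_bigl (fun d => (h (tail d) < t) && predT d)) => [|d]; last by rewrite andbT.
rewrite -(sum_fibers_cond tail (fun x => h x < t)) (bigD1 v0) //= h_v0 t0 [X in _ + X]big1 ?addr0.
  by apply: eq_bigl => d; rewrite andbT.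
move=> x xv0; case: ifP => // hx.
have xv1 : x != v1 by apply: contraTneq hx => ->; rewrite h_v1 -leNgt ltW.
rewrite -[RHS](h_harmonic x xv0 xv1); by apply: eq_big => [d|d /andP [/eqP <- _] //]; rewrite andbT.
Qed.

(* Since no edge crosses the level t of a vertex, the current leaving the
   sublevel set {h < t} is the current entering the vertices of level t. *)
Lemma level_flux t : (exists z, h z = t) -> 0 < t < 1 ->
  \sum_(d | (h (hd d) == t) && harm_oriented tail alpha h d) grad_ d =
  \sum_(d | tail d == v0) grad_ d.
Proof.
move=> [z hz] t01; rewrite -(sublevel_current _ t01) [RHS](bigID (fun d => h (hd d) < t)) /=.
rewrite [X in _ = X + _]sum_grad_sym => [|d]; last by rewrite headK andbC.
rewrite add0r; apply: eq_bigl => d; rewrite /harm_oriented.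
have := edge_nonflat d; have := no_crossing d z; rewrite hz.
set a := h (tail d); set b := h (hd d) => no_cross nonflat.
have [bt|bt] := eqVneq b t.
  by rewrite bt ltxx andbT le_eqVlt -bt (negPf nonflat).
apply/esym/negbTE/andP => -[a_t]; rewrite -leNgt le_eqVlt eq_sym (negPf bt) /= => t_b.
by apply: no_cross; rewrite a_t t_b.
Qed.

(* Every edge at v0 points upwards, so eta is the total current out of v0. *)
Lemma eta_tail : eta_ = \sum_(d | tail d == v0) grad_ d.
Proof.
rewrite /Defs.eta; apply: eq_bigl => d; case: eqP => [td|_]; rewrite ?andbF //.
by rewrite andbT /harm_oriented td h_v0 voltage_ge0.
Qed.

Lemma eta_neq0 : eta_ != 0.
Proof.
rewrite eta_tail; have [d td] := out_dart v0; rewrite gt_eqF // (bigD1 d) /=; last by rewrite td.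
have up e : tail e = v0 -> 0 <= grad_ e.
  by move=> te; rewrite /grad te h_v0 subr0 mulr_ge0 ?voltage_ge0 ?ltW.
rewrite ltr_pwDl ?sumr_ge0 // => [|e /andP [/eqP te _]]; last exact: up.
rewrite /grad td h_v0 subr0 mulr_gt0 // lt_neqAle voltage_ge0 andbT.
by have := edge_nonflat d; rewrite td h_v0.
Qed.

Lemma mu_sum1 t : (exists z, h z = t) -> 0 < t < 1 -> \sum_x mu_ t x = 1.
Proof.
move=> level t01; rewrite (eq_bigr (fun x => (if h x == t then
  \sum_(d | (hd d == x) && harm_oriented tail alpha h d) grad_ d else 0) / eta_)).
  by rewrite -mulr_suml sum_fibers_cond level_flux // -eta_tail divff ?eta_neq0.
move=> x _; rewrite /mu; case: ifP => _; last by rewrite mul0r.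
by rewrite /length; congr (_ / _); apply: eq_bigl => d; rewrite andbC.
Qed.

Definition kappa t u w : R := (t - u) * (w - t) / ((w - u) * eta_).

Lemma kappa_neq0 t u w : u < t < w -> kappa t u w != 0.
Proof.
move=> /andP [ut tw]; rewrite /kappa !mulf_neq0 ?invr_eq0 ?mulf_neq0 ?eta_neq0 //.
all: by rewrite subr_eq0 ?gt_eqF ?lt_eqF // (lt_trans ut tw).
Qed.

Lemma mu_on_level x t u w : 0 < t < 1 -> h x = t -> neighbour_levels t u w ->
  mu_ t x = kappa t u w * pi_ x.
Proof.
move=> t01 hx nbs; have [pi_x len_x cond_w] := level_balance _ _ _ _ t01 hx nbs.
have [/andP [ut tw] _] := nbs.
rewrite /mu hx eqxx len_x pi_x cond_w /kappa; field.
by rewrite eta_neq0 !subr_eq0 !gt_eqF // (lt_trans ut tw).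
Qed.

(* Reversibility: pi x trans x y = conductance between x and y. *)
Lemma cond_from_level t y :
  \sum_(d | (h (tail d) == t) && (hd d == y)) c d = cond_to y t.
Proof.
rewrite /cond_to (reindex_inj (@perm_inj _ alpha)) /=.
by apply: eq_big => d; rewrite ?headK 1?andbC // c_sym.
Qed.

Lemma reversibility t u w t' y : 0 < t < 1 -> neighbour_levels t u w ->
  \sum_x mu_ t x * (if h y == t' then trans_ x y else 0) =
  (if h y == t' then kappa t u w * cond_to y t else 0).
Proof.
move=> t01 nbs; case: ifP => _; last by rewrite big1 // => x _; rewrite mulr0.
rewrite -cond_from_level -(sum_fibers_cond tail (fun x => h x == t)) mulr_sumr.
apply: eq_bigr => x _; case: eqP => hx; last by rewrite /mu ifF ?mul0r ?mulr0 //; apply/eqP.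
by rewrite (mu_on_level _ _ _ _ t01 hx nbs) /trans; field; apply: pi_neq0.
Qed.

Lemma cond_to_mu y t t' u' w' : 0 < t' < 1 -> h y = t' -> neighbour_levels t' u' w' ->
  cond_to y t =
  (if t == u' then eta_ / (t' - u') else if t == w' then eta_ / (w' - t') else 0)
  * mu_ t' y.
Proof.
move=> t01 hy nbs; have [_ len_y cond_w] := level_balance _ _ _ _ t01 hy nbs.
have [/andP [ut tw] _] := nbs.
rewrite /mu hy eqxx len_y; case: eqP => [->|tu].
  by field; rewrite eta_neq0 subr_eq0 gt_eqF.
case: eqP => [->|tw']; last by rewrite mul0r (cond_to_off _ _ _ _ _ hy nbs) //; apply/eqP.
by rewrite cond_w; field; rewrite eta_neq0 !subr_eq0 !gt_eqF.
Qed.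

Lemma forward_mu t t' : 0 < t < 1 -> 0 < t' < 1 ->
  (exists d, h (tail d) = t /\ h (hd d) = t') -> exists K, K != 0 /\ forall y,
    \sum_x mu_ t x * (if h y == t' then trans_ x y else 0) = K * mu_ t' y.
Proof.
move=> t01 t01' [d [td hdd]].
have [u [w nbs]] := neighbour_levels_exist t; have [u' [w' nbs']] := neighbour_levels_exist t'.
have [/andP [ut' tw'] nb'] := nbs'.
exists (kappa t u w * if t == u' then eta_ / (t' - u') else if t == w' then eta_ / (w' - t') else 0).
split=> [|y].
  rewrite mulf_neq0 ?kappa_neq0 //; first by case: nbs.
  have := nb' (alpha d) hdd; rewrite headK td => -[tu'|tw'']; [subst u' | subst w'].
    by rewrite eqxx mulf_neq0 ?invr_eq0 ?eta_neq0 // subr_eq0 gt_eqF.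
  rewrite gt_eqF ?(lt_trans ut' tw') // eqxx.
  by rewrite mulf_neq0 ?invr_eq0 ?eta_neq0 // subr_eq0 gt_eqF.
rewrite (reversibility _ _ _ _ _ t01 nbs); case: eqP => [hy|/eqP hy].
  by rewrite (cond_to_mu _ _ _ _ _ t01' hy nbs') mulrA.
by rewrite /mu (negPf hy) mulr0.
Qed.

Lemma escape_prob z s :
  \sum_y (if h y == s then trans_ z y else 0) = cond_to z s / pi_ z.
Proof.
rewrite (eq_bigr (fun y => (if h y == s then
  \sum_(d | (hd d == y) && (tail d == z)) c d else 0) / pi_ z)).
  by rewrite -mulr_suml sum_fibers_cond; congr (_ / _); apply: eq_bigl => d; rewrite andbC.
move=> y _; case: ifP => _; last by rewrite mul0r.
by rewrite /trans; congr (_ / _); apply: eq_bigl => d; rewrite andbC.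
Qed.

(* The conductance from a vertex z of level t to the level s is a fixed
   multiple of pi z, the gambler's ruin probability. *)
Lemma cond_to_pi z t u w s : 0 < t < 1 -> h z = t -> neighbour_levels t u w ->
  cond_to z s =
  (if s == u then (w - t) / (w - u) else if s == w then (t - u) / (w - u) else 0)
  * pi_ z.
Proof.
move=> t01 hz nbs; have [pi_z _ cond_w] := level_balance _ _ _ _ t01 hz nbs.
have [/andP [ut tw] _] := nbs; have uw := lt_trans ut tw.
rewrite pi_z cond_w; case: eqP => [->|su].
  by field; rewrite !subr_eq0 !gt_eqF.
case: eqP => [->|sw]; last by rewrite mul0r (cond_to_off _ _ _ _ _ hz nbs) //; apply/eqP.
by rewrite cond_w; field; rewrite !subr_eq0 !gt_eqF.
Qed.

Lemma backward_trans t t' : 0 < t < 1 ->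
  (exists d, h (tail d) = t /\ h (hd d) = t') -> exists s, s != 0 /\ forall z,
    h z = t -> \sum_y (if h y == t' then trans_ z y else 0) = s.
Proof.
move=> t01 [d [td hdd]]; have [u [w nbs]] := neighbour_levels_exist t.
have [/andP [ut tw] nb] := nbs; have uw := lt_trans ut tw.
exists (if t' == u then (w - t) / (w - u) else if t' == w then (t - u) / (w - u) else 0).
split=> [|z hz]; last by rewrite escape_prob (cond_to_pi _ _ _ _ _ t01 hz nbs) mulfK ?pi_neq0.
have := nb d td; rewrite hdd => -[t'u|t'w]; [subst u | subst w].
  by rewrite eqxx mulf_neq0 ?invr_eq0 // subr_eq0 gt_eqF.
by rewrite (gt_eqF uw) eqxx mulf_neq0 ?invr_eq0 // subr_eq0 gt_eqF.
Qed.

End VoltageLevels.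

Arguments mu_sum1 {R V D tail alpha c v0 v1 h}.
Arguments forward_mu {R V D tail alpha c v0 v1 h}.
Arguments backward_trans {R V D tail alpha c v0 v1 h}.

Lemma sum_neq0_witness {R : realType} {I : finType} (P : pred I) (F : I -> R) :
  \sum_(i | P i) F i != 0 -> exists2 i, P i & F i != 0.
Proof.
case: (pickP (fun i => P i && (F i != 0))) => [i /andP [Pi Fi] _|none]; first by exists i.
rewrite big1 ?eqxx // => i Pi; apply/eqP; move: (none i); rewrite Pi.
by move/negbFE.
Qed.

Lemma trans_dart {R : realType} {V D : finType} {tail : D -> V} {alpha : {perm D}}
    {c : D -> R} {x y : V} :
  trans tail alpha c x y != 0 -> exists d, tail d = x /\ Defs.head tail alpha d = y.
Proof.
rewrite /trans mulf_eq0 negb_or => /andP [/sum_neq0_witness [d /andP [/eqP td /eqP hd]] _] _.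
by exists d.
Qed.

Lemma admissible_step (R : realType) (V D : finType) (tail : D -> V)
    (alpha : {perm D}) (c : D -> R) (h start : V -> R) (N : nat) (as_ : nat -> R) n :
  (n < N)%N ->
  0 < walk_cond tail alpha c start N
        [pred p : {ffun 'I_N.+1 -> V} | h (p (inord n.+1)) == as_ n.+1]
        [pred p : {ffun 'I_N.+1 -> V} | h (p (inord n)) == as_ n] ->
  exists d, h (tail d) = as_ n /\ h (Defs.head tail alpha d) = as_ n.+1.
Proof.
move=> nN; rewrite /walk_cond /walk_prob => pos.
have : \sum_(p : {ffun 'I_N.+1 -> V} |
            (h (p (inord n.+1)) == as_ n.+1) && (h (p (inord n)) == as_ n))
    start (p ord0) * \prod_(k < N) trans tail alpha c (p (inord k)) (p (inord k.+1)) != 0.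
  by apply: contraTneq pos => ->; rewrite mul0r ltxx.
case/sum_neq0_witness => p /andP [/eqP p_n1 /eqP p_n].
rewrite mulf_eq0 negb_or (bigD1 (Ordinal nN)) //= mulf_eq0 negb_or => /andP [_ /andP [jump _]].
by have [d [td hd]] := trans_dart jump; exists d; rewrite td hd.
Qed.

Theorem mainTheorem8 (R : realType) (V D : finType) (tail : D -> V)
    (alpha sigma : {perm D}) (c : D -> R) (v0 v1 : V) (h : V -> R)
    (a : R) (N : nat) (as_ : nat -> R) :
  planar_map tail alpha sigma ->
  conductance alpha c ->
  is_voltage tail alpha c v0 v1 h ->
  (forall x : V, level_in_vertices tail alpha h (h x)) ->
  0 < a < 1 ->
  level_in_vertices tail alpha h a ->
  (exists x : V, h x = a) ->
  as_ 0%N = a ->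
  (forall n, (n <= N)%N -> 0 < as_ n < 1) ->
  (forall n, (n < N)%N ->
     0 < walk_cond tail alpha c (mu tail alpha c v0 h a) N
           [pred p : {ffun 'I_N.+1 -> V} | h (p (inord n.+1)) == as_ n.+1]
           [pred p : {ffun 'I_N.+1 -> V} | h (p (inord n)) == as_ n]) ->
  forall (i : nat) (xi : V), (i <= N)%N -> h xi = as_ i ->
    walk_cond tail alpha c (mu tail alpha c v0 h a) N
      [pred p : {ffun 'I_N.+1 -> V} | p (inord i) == xi]
      [pred p : {ffun 'I_N.+1 -> V} | [forall n : 'I_N.+1, (1 <= n)%N ==> (h (p n) == as_ n)]]
    = mu tail alpha c v0 h (as_ i) xi.
Proof.
move=> [[alphaK _ _ _] connected _] [c_gt0 c_sym] [h_v0 h_v1 h_harmonic] h_levels _ _ _.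
move=> as0 as01 admissible i xi iN hxi.
have edge n : (n < N)%N ->
    exists d, h (tail d) = as_ n /\ h (Defs.head tail alpha d) = as_ n.+1.
  by move=> nN; apply: admissible_step nN (admissible n nN).
rewrite /walk_cond /walk_prob.
apply: (@level_conditioned_law R V _ _ h as_ (fun n => mu tail alpha c v0 h (as_ n)) N).
- by move=> y; rewrite as0.
- by move=> n y /negPf hy; rewrite /mu hy.
- move=> n nN; apply: (forward_mu alphaK c_gt0 c_sym connected h_v0 h_v1 h_harmonic h_levels).
  + exact: as01 (ltnW nN).
  + exact: as01.
  + exact: edge.
- move=> n nN; apply: (backward_trans alphaK c_gt0 c_sym connected h_v0 h_v1 h_harmonic h_levels).
  + exact: as01 (ltnW nN).
  + exact: edge.
- exact: iN.
- apply: (mu_sum1 alphaK c_gt0 c_sym connected h_v0 h_v1 h_harmonic h_levels).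
  + by exists xi.
  + exact: as01.
Qed.
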